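(* Let $C=(C_1,\dots,C_L)$ be a random vector whose components $C_i$ are discrete (finite-valued) and mutually independent, with prior $p(C)=\prod_{i=1}^L p(C_i)$, so that $\mathbb{I}(C;\hat X)$ is bounded from above by $\mathbb{H}(C)$. Let $Z'$ be a noise vector independent of $C$, let $\mathcal{G}$ be a generator, and let $\hat X=\mathcal{G}(Z',C)$ be the generated image. Let $Q(C\mid \hat X)$ be an auxiliary (approximate posterior) conditional distribution of mean-field form, $Q(C\mid\hat X)=\prod_{i=1}^L Q(C_i\mid \hat X)$. Define $$L_{\text{info}}(\mathcal{G},Q)=\mathbb{E}_{C\sim p(C),\,\hat X\sim \mathcal{G}(Z',C)}\big[\log Q(C\mid\hat X)-\log p(C)\big].$$ Then, when $L_{\text{info}}(\mathcal{G},Q)\to \mathbb{I}(C;\hat X)$, the conditional total correlation satisfies $\mathbb{TC}(C\mid\hat X)\to 0$ almost everywhere in $\hat X$.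
   Context: Here $\hat X\sim\mathcal{G}(Z',C)$ denotes sampling from the conditional distribution $p(\hat X\mid C)$ induced by the generator (with randomness from $Z'$ and any internal noise). $\mathbb{I}$ denotes mutual information and $\mathbb{H}$ entropy. For a realization $\hat x$ of $\hat X$, the total correlation of $C$ given $\hat X=\hat x$ is $$\mathbb{TC}(C\mid\hat X=\hat x)=D_{KL}\Big(p(C\mid\hat X=\hat x)\,\Big\|\,\prod_{i=1}^L p(C_i\mid \hat X=\hat x)\Big),$$ where $p(C\mid\hat X)$ is the true posterior and $D_{KL}$ is the Kullback–Leibler divergence. *)

From HB Require Import structures.
From mathcomp Require Import all_boot all_algebra.
From mathcomp Require Import all_classical all_reals all_analysis.
Set Implicit Arguments. Unset Strict Implicit. Unset Printing Implicit Defensive.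
Import GRing.Theory Num.Theory.
Local Open Scope ring_scope.

Section InfoDefs.
Variables (R : realType) (L : nat) (T : 'I_L -> finType).

Definition config := {dffun forall i : 'I_L, T i}.

Definition is_pmf (U : finType) (f : U -> R) :=
  (forall u, 0 <= f u) /\ \sum_(u : U) f u = 1.

Definition joint (p : forall i, T i -> R) (c : config) : R :=
  \prod_(i < L) p i (c i).

Variables (d : measure_display) (X : measurableType d).

(* g c x : density (w.r.t. a reference measure mu) of the conditional law
   p(Xhat | C = c) induced by the generator (randomness from Z'). *)

Definition marg (p : forall i, T i -> R) (g : config -> X -> R) (x : X) : R :=
  \sum_(c : config) joint p c * g c x.

Definition post p g (c : config) (x : X) : R :=
  joint p c * g c x / marg p g x.

Definition post_i p g (i : 'I_L) (a : T i) (x : X) : R :=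
  \sum_(c : config | c i == a) post p g c x.

(* conditional total correlation TC(C | Xhat = x)
   = KL( p(C|x) || prod_i p(C_i|x) ), with the convention 0 log 0 = 0 *)
Definition TC p g (x : X) : R :=
  \sum_(c : config)
     post p g c x * ln (post p g c x / \prod_(i < L) post_i p g (c i) x).

Definition MI p (mu : {measure set X -> \bar R}) g : \bar R :=
  (\sum_(c : config)
     (joint p c)%:E * \int[mu]_x (g c x * ln (post p g c x / joint p c))%:E)%E.

Definition elog (r : R) : \bar R := if 0 < r then (ln r)%:E else -oo%E.

Definition Qjoint (Q : forall i : 'I_L, X -> T i -> R) (c : config) (x : X) : R :=
  \prod_(i < L) Q i x (c i).

Definition Linfo p (mu : {measure set X -> \bar R}) g Q : \bar R :=
  (\sum_(c : config)
     (joint p c)%:E *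
       \int[mu]_x ((g c x)%:E * (elog (Qjoint Q c x) - (ln (joint p c))%:E)))%E.

Definition ExpTC p (mu : {measure set X -> \bar R}) g : \bar R :=
  (\int[mu]_x (marg p g x * TC p g x)%:E)%E.

End InfoDefs.

From HB Require Import structures.
From mathcomp Require Import all_boot all_algebra.
From mathcomp Require Import all_classical all_reals all_analysis measurable_realfun.
From mathcomp Require Import ring lra.
Import order.Order.TTheory GRing.Theory Num.Theory.
Local Open Scope classical_set_scope.
Local Open Scope ring_scope.

(** Fix an image x and let P be the posterior p(C | x).  For a mean-field
    Q = prod_i Q_i the cross entropy of P against Q splits as
    H(P) + TC(P) + sum_i KL(P_i || Q_i), so it dominates H(P) + TC(P).
    Integrating against the marginal density of X̂, the gap I(C; X̂) - L_info
    is the expected cross entropy minus H(C | X̂); it therefore dominates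
    E[TC(C | X̂)] >= 0, and a vanishing gap squeezes E[TC(C | X̂)] to 0. *)

Lemma sum_dffun_prod (R : comNzSemiRingType) (I : finType) (T : I -> finType)
    (F : forall i, T i -> R) :
  \sum_(c : {dffun forall i : I, T i}) \prod_i F i (c i) =
  \prod_i \sum_(a : T i) F i a.
Proof.
pose G (i : I) (j : {i : I & T i}) := F (tag j) (tagged j).
have tagged_sum i : \sum_(a : T i) F i a = \sum_(j | tagged_with T i j) G i j.
  transitivity (\sum_(k | k == i) \sum_(a : T k) F k a); first by rewrite big_pred1_eq.
  rewrite (sig_big_dep (fun k => k == i) (fun k _ => true) (fun k a => F k a)).
  by apply: eq_bigl => j; rewrite andbT.
rewrite (eq_bigr _ (fun i _ => tagged_sum i)).
rewrite (bigA_distr_big_dep (fun i => tagged_with T i) G) [RHS]big_sub.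
pose h (c : {dffun forall i : I, T i}) := to_family_tagged_with (fprod_of_dffun c).
have h_bij : bijective h.
  exists (fun x => dffun_of_fprod (of_family_tagged_with x)) => x; rewrite /h.
    by rewrite to_family_tagged_withK fprod_of_dffunK.
  by rewrite dffun_of_fprodK of_family_tagged_withK.
rewrite [RHS](reindex h); last exact: onW_bij.
by apply: eq_bigr => c _; apply: eq_bigr => i _; rewrite /G /h /= ffunE.
Qed.

Lemma ln_prod (R : realType) (I : finType) (f : I -> R) :
  (forall i, 0 < f i) -> ln (\prod_i f i) = \sum_i ln (f i).
Proof.
move=> f_gt0.
suff [] : 0 < \prod_i f i /\ ln (\prod_i f i) = \sum_i ln (f i) by [].
apply: (big_ind2 (fun x y => 0 < x /\ ln x = y)) => [|x1 x2 y1 y2 [x1_gt0 <-] [x2_gt0 <-]|i _].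
- by rewrite ln1.
- by rewrite mulr_gt0 // lnM.
- by [].
Qed.

Lemma sub_le_mul_lnB (R : realType) (a b : R) :
  0 <= a -> 0 <= b -> (0 < a -> 0 < b) -> a - b <= a * (ln a - ln b).
Proof.
move=> a_ge0 b_ge0 ab; have [->|a_neq0] := eqVneq a 0; first by rewrite mul0r; lra.
have a_gt0 : 0 < a by rewrite lt_neqAle eq_sym a_neq0.
have b_gt0 := ab a_gt0.
have ba_gt0 : 0 < b / a by rewrite divr_gt0.
have : ln (b / a) <= b / a - 1.
  have := @le_ln1Dx R (b / a - 1); rewrite addrCA subrr addr0; apply; lra.
rewrite ln_div ?posrE // => /(ler_wpM2l (ltW a_gt0)).
rewrite mulrBr mulrBr mulrCA divff ?mulr1 ?gt_eqF //.
lra.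
Qed.

Lemma pmf_le1 (R : realType) (U : finType) (f : U -> R) u : is_pmf f -> f u <= 1.
Proof. by case=> f_ge0 <-; rewrite (bigD1 u) //= lerDl sumr_ge0. Qed.

Section ProductPmf.
Context {R : realType} {L : nat} {T : 'I_L -> finType} {q : forall i, T i -> R}.
Hypothesis hq : forall i, is_pmf (q i).

Lemma prod_pmf_ge0 (c : config T) : 0 <= \prod_i q i (c i).
Proof. by apply: prodr_ge0 => i _; case: (hq i). Qed.

Lemma prod_pmf_le1 (c : config T) : \prod_i q i (c i) <= 1.
Proof.
by apply: prodr_ile1 => i _; rewrite pmf_le1 // andbT; case: (hq i).
Qed.

End ProductPmf.

Lemma elog_le0 (R : realType) (r : R) : r <= 1 -> (elog r <= 0)%E.
Proof. by move=> r_le1; rewrite /elog; case: ifP => // _; rewrite lee_fin ln_le0. Qed.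

Section MeanFieldGibbs.
Variables (R : realType) (L : nat) (T : 'I_L -> finType).
Variables (P : config T -> R) (P_ge0 : forall c, 0 <= P c) (P_sum1 : \sum_c P c = 1).

Definition marginal i (a : T i) := \sum_(c : config T | c i == a) P c.

Definition tcorr := \sum_c P c * ln (P c / \prod_i marginal i (c i)).

Lemma marginal_ge0 i a : 0 <= marginal i a.
Proof. exact: sumr_ge0. Qed.

Lemma le_marginal c i : P c <= marginal i (c i).
Proof. by rewrite /marginal (bigD1 c) //= lerDl sumr_ge0. Qed.

Lemma sum_marginal_comp i (f : T i -> R) :
  \sum_c P c * f (c i) = \sum_a marginal i a * f a.
Proof.
rewrite (partition_big (fun c : config T => c i) predT) //.
by apply: eq_bigr => a _; rewrite /marginal mulr_suml; apply: eq_bigr => c /eqP ->.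
Qed.

Lemma sum_marginal i : \sum_a marginal i a = 1.
Proof.
have := sum_marginal_comp i (fun _ => 1).
by rewrite (eq_bigr _ (fun c _ => mulr1 _)) P_sum1 (eq_bigr _ (fun a _ => mulr1 _)).
Qed.

Lemma marginal_gt0P i a : 0 < marginal i a -> exists2 c : config T, c i = a & 0 < P c.
Proof.
move=> marg_gt0; apply: contrapT => no_c; move: marg_gt0.
rewrite /marginal big1 ?ltxx // => c /eqP ci.
have := P_ge0 c; rewrite le_eqVlt => /orP[/eqP <-//|Pc_gt0].
by exfalso; apply: no_c; exists c.
Qed.

Lemma prod_marginal_gt0 c : 0 < P c -> 0 < \prod_i marginal i (c i).
Proof. by move=> Pc_gt0; apply: prodr_gt0 => i _; exact: lt_le_trans (le_marginal c i). Qed.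

Lemma tcorr_ge0 : 0 <= tcorr.
Proof.
have gibbs c : P c - \prod_i marginal i (c i) <= P c * ln (P c / \prod_i marginal i (c i)).
  have [->|Pc_neq0] := eqVneq (P c) 0.
    by rewrite mul0r sub0r oppr_le0 prodr_ge0 // => i _; exact: marginal_ge0.
  have Pc_gt0 : 0 < P c by rewrite lt_neqAle eq_sym Pc_neq0 P_ge0.
  rewrite ln_div ?posrE ?prod_marginal_gt0 //.
  apply: sub_le_mul_lnB => //; last by move=> _; exact: prod_marginal_gt0.
  by apply: prodr_ge0 => i _; exact: marginal_ge0.
apply: le_trans (ler_sum _ (fun c _ => gibbs c)).
rewrite sumrB P_sum1 (@sum_dffun_prod _ _ _ marginal).
by rewrite big1 ?subrr // => i _; exact: sum_marginal.
Qed.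

Section MeanField.
Variables (q : forall i, T i -> R) (hq : forall i, is_pmf (q i)).
Let Q (c : config T) := \prod_i q i (c i).

(* KL(P || Q) - TC(P) = sum_i KL(P_i || q_i), and each summand is nonnegative by Gibbs. *)
Lemma tcorr_le_KL : (forall c, 0 < P c -> 0 < Q c) ->
  tcorr <= \sum_c P c * (ln (P c) - ln (Q c)).
Proof.
move=> Q_gt0.
have q_gt0 c i : 0 < P c -> 0 < q i (c i).
  move=> /Q_gt0; rewrite lt_def => /andP[Qc_neq0 _]; rewrite lt_def (proj1 (hq i)) andbT.
  by apply: contraNneq Qc_neq0 => qi0; rewrite /Q (bigD1 i) //= qi0 mul0r.
have split_term c : P c * (ln (P c) - ln (Q c)) - P c * ln (P c / \prod_i marginal i (c i))
    = \sum_i P c * (ln (marginal i (c i)) - ln (q i (c i))).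
  have [->|Pc_neq0] := eqVneq (P c) 0.
    by rewrite !mul0r subrr big1 // => i _; rewrite mul0r.
  have Pc_gt0 : 0 < P c by rewrite lt_neqAle eq_sym Pc_neq0 P_ge0.
  rewrite ln_div ?posrE ?prod_marginal_gt0 // /Q !ln_prod => [| i | i]; last 2 first.
  - exact: lt_le_trans Pc_gt0 (le_marginal c i).
  - exact: q_gt0.
  by rewrite -mulr_sumr sumrB; ring.
rewrite -subr_ge0 -sumrB (eq_bigr _ (fun c _ => split_term c)) exchange_big /=.
apply: sumr_ge0 => i _; rewrite (sum_marginal_comp i (fun a => ln (marginal i a) - ln (q i a))).
have gibbs a : marginal i a - q i a <= marginal i a * (ln (marginal i a) - ln (q i a)).
  apply: sub_le_mul_lnB; [exact: marginal_ge0|exact: (proj1 (hq i))|].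
  by move=> /marginal_gt0P[c <- /q_gt0]; apply.
apply: le_trans (ler_sum _ (fun a _ => gibbs a)).
by rewrite sumrB sum_marginal (proj2 (hq i)) subrr.
Qed.

Lemma entropy_add_tcorr_le_xent :
  ((\sum_c - (P c * ln (P c)) + tcorr)%:E <= \sum_c (P c)%:E * - elog (Q c))%E.
Proof.
have term_ge0 c : (0 <= (P c)%:E * - elog (Q c))%E.
  by rewrite mule_ge0 ?lee_fin // oppe_ge0 elog_le0 // prod_pmf_le1.
have [[c Pc_gt0 Qc_ngt0]|Q_gt0] := pselect (exists2 c, 0 < P c & ~ 0 < Q c).
  rewrite [X in (_ <= X)%E](bigD1 c) //= {1}/elog ifN; last exact/negP.
  have rest_ge0 : (0 <= \sum_(c' | c' != c) (P c')%:E * - elog (Q c'))%E.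
    by rewrite sume_ge0.
  by rewrite gt0_muley ?lte_fin // addye ?leey // gt_eqF // (lt_le_trans _ rest_ge0).
have {}Q_gt0 c : 0 < P c -> 0 < Q c.
  by move=> Pc_gt0; apply: contrapT => Qc_ngt0; apply: Q_gt0; exists c.
rewrite (eq_bigr (fun c => (P c * - ln (Q c))%:E)) => [|c _]; last first.
  have [->|Pc_neq0] := eqVneq (P c) 0; first by rewrite mul0e mul0r.
  have Pc_gt0 : 0 < P c by rewrite lt_neqAle eq_sym Pc_neq0 P_ge0.
  by rewrite /elog Q_gt0.
rewrite sumEFin lee_fin addrC -lerBrDr -sumrB.
rewrite (eq_bigr (fun c => P c * (ln (P c) - ln (Q c)))) => [|c _]; last by ring.
exact: tcorr_le_KL.
Qed.

End MeanField.
End MeanFieldGibbs.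

Section ExtendedRealAlgebra.
Local Open Scope ereal_scope.
Variable R : realType.

Lemma sumeEFinB (I : finType) (a : I -> R) (v : I -> \bar R) :
  (forall i, 0 <= v i) -> \sum_i ((a i)%:E - v i) = (\sum_i a i)%:E - \sum_i v i.
Proof.
move=> v_ge0; rewrite big_split /= sumEFin sumeN // => i j _ _.
by apply: ge0_adde_def; rewrite inE.
Qed.

Lemma addeBswap (x y b n : \bar R) : x \is a fin_num -> y \is a fin_num ->
  x + b = y + n -> x - n = y - b.
Proof.
move: x y b n => [x| |] // [y| |] // [b| |] [n| |] //= _ _ [] ?.
by congr EFin; lra.
Qed.

Lemma lee_subB_gap (a u v e : \bar R) : a \is a fin_num -> u \is a fin_num ->
  u + e <= v -> e <= (a - u) - (a - v).
Proof.
move: a u => [a| |] // [u| |] // _ _.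
case: v => [v| |]; case: e => [e| |] //=.
- by rewrite -!EFinD !lee_fin => ?; lra.
- by move=> _; exact: leNye.
- by move=> _; rewrite -EFinD addey ?leey.
Qed.

End ExtendedRealAlgebra.

Section IntegralFacts.
Local Open Scope ereal_scope.
Variables (d : measure_display) (X : measurableType d) (R : realType).
Variable mu : {measure set X -> \bar R}.

(* The subtrahend need not be integrable: both sides may equal -oo. *)
Lemma ge0_integral_EFinB (a : X -> R) (B : X -> \bar R) :
  measurable_fun setT a -> (forall x, (0 <= a x)%R) ->
  \int[mu]_x (a x)%:E \is a fin_num ->
  measurable_fun setT B -> (forall x, 0 <= B x) ->
  \int[mu]_x ((a x)%:E - B x) = \int[mu]_x (a x)%:E - \int[mu]_x B x.
Proof.
move=> ma a_ge0 a_fin mB B_ge0.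
have mA : measurable_fun setT (fun x => (a x)%:E) by exact/measurable_EFinP.
set F := fun x => (a x)%:E - B x.
have mF : measurable_fun setT F by exact: emeasurable_funB.
(* F = F^\+ - F^\- rearranged without subtractions, as B may take the value +oo *)
have parts x : F^\+ x + B x = (a x)%:E + F^\- x.
  rewrite funeposE funenegE /F; have := B_ge0 x; case: (B x) => [b| |] // b_ge0.
    rewrite lee_fin in b_ge0; rewrite -EFinB -EFinN -!EFin_max -!EFinD; congr EFin.
    by case: (lerP (a x - b) 0) => ?; case: (lerP (- (a x - b)) 0) => ?; lra.
  by rewrite /= maxNye maxye addey // addey.
have mFp : measurable_fun setT F^\+ by exact: measurable_funepos.
have mFn : measurable_fun setT F^\- by exact: measurable_funeneg.
have Fp_ge0 x : [set: X] x -> 0 <= F^\+ x by move=> _; exact: funepos_ge0.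
have Fn_ge0 x : [set: X] x -> 0 <= F^\- x by move=> _; exact: funeneg_ge0.
have B_ge0' x : [set: X] x -> 0 <= B x by move=> _; exact: B_ge0.
have A_ge0 x : [set: X] x -> 0 <= (a x)%:E by move=> _; rewrite lee_fin.
have Fp_le_a : \int[mu]_x F^\+ x <= \int[mu]_x (a x)%:E.
  apply: ge0_le_integral => // x _; rewrite funeposE ge_max lee_fin a_ge0 andbT.
  by have := leeB (lexx (a x)%:E) (B_ge0 x); rewrite sube0.
have : \int[mu]_x (F^\+ x + B x) = \int[mu]_x ((a x)%:E + F^\- x).
  by apply: eq_integral => x _; exact: parts.
rewrite ge0_integralD // ge0_integralD // => parts_eq; rewrite integralE.
apply: addeBswap parts_eq => //.
by rewrite ge0_fin_numE ?integral_ge0 // (le_lt_trans Fp_le_a) // ltey_eq a_fin.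
Qed.

End IntegralFacts.

Lemma measurable_funV_ge0 d (X : measurableType d) (R : realType) (f : X -> R) :
  measurable_fun setT f -> (forall x, 0 <= f x) ->
  measurable_fun setT (fun x => (f x)^-1).
Proof.
move=> mf f_ge0.
have -> : (fun x => (f x)^-1) = (fun x => if f x <= 0 then 0 else expR (- ln (f x))).
  apply/funext => x; case: ifPn => [fx_le0|]; last by rewrite -ltNge expRN => /lnK ->.
  suff -> : f x = 0 by rewrite invr0.
  by apply/le_anti; rewrite fx_le0 f_ge0.
apply: measurable_fun_ifT; first exact: measurable_fun_ler.
  exact: measurable_cst.
by apply: measurableT_comp => //; apply: measurableT_comp => //; exact: measurableT_comp.
Qed.

Section InformationGap.
Variables (R : realType) (L : nat) (T : 'I_L -> finType).
Variable p : forall i : 'I_L, T i -> R.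
Hypothesis hp : forall i, is_pmf (p i).
Variables (d : measure_display) (X : measurableType d).
Variable mu : {measure set X -> \bar R}.
Variable G : config T -> X -> R.
Hypothesis mG : forall c, measurable_fun setT (G c).
Hypothesis G_ge0 : forall c x, 0 <= G c x.
Hypothesis G_int1 : forall c, (\int[mu]_x (G c x)%:E = 1)%E.
Variable q : forall i : 'I_L, X -> T i -> R.
Hypothesis mq : forall i a, measurable_fun setT (fun x => q i x a).
Hypothesis hq : forall i x, is_pmf (q i x).

Local Notation jp := (joint p).
Local Notation m := (marg p G).
Local Notation po := (post p G).

Lemma joint_ge0 c : 0 <= jp c.
Proof. exact: prod_pmf_ge0. Qed.

Lemma jointG_ge0 c x : 0 <= jp c * G c x.
Proof. by rewrite mulr_ge0 ?joint_ge0. Qed.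

Lemma marg_ge0 x : 0 <= m x.
Proof. by apply: sumr_ge0 => c _; exact: jointG_ge0. Qed.

Lemma jointG_le_marg c x : jp c * G c x <= m x.
Proof. by rewrite /marg (bigD1 c) //= lerDl sumr_ge0 // => c' _; exact: jointG_ge0. Qed.

Lemma post_ge0 c x : 0 <= po c x.
Proof. by rewrite divr_ge0 ?jointG_ge0 ?marg_ge0. Qed.

Lemma post_le1 c x : po c x <= 1.
Proof.
rewrite /post; have [->|m_neq0] := eqVneq (m x) 0; first by rewrite invr0 mulr0.
by rewrite ler_pdivrMr ?mul1r ?jointG_le_marg // lt_def m_neq0 marg_ge0.
Qed.

(* Bayes' rule, which also holds where the marginal density vanishes. *)
Lemma jointG_marg_post c x : jp c * G c x = m x * po c x.
Proof.
rewrite /post; have [m0|m_neq0] := eqVneq (m x) 0; last by rewrite mulrCA divff ?mulr1.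
by rewrite m0 mul0r; apply/le_anti; rewrite jointG_ge0 andbT -[X in _ <= X]m0 jointG_le_marg.
Qed.

Lemma sum_post x : 0 < m x -> \sum_c po c x = 1.
Proof. by move=> m_gt0; rewrite /post -mulr_suml divff ?gt_eqF. Qed.

Lemma measurable_marg : measurable_fun setT m.
Proof. by apply: measurable_sum => c; apply: measurable_funM. Qed.

Lemma measurable_post c : measurable_fun setT (po c).
Proof.
apply: measurable_funM; first exact: measurable_funM.
exact: measurable_funV_ge0 measurable_marg marg_ge0.
Qed.

Lemma measurable_TC : measurable_fun setT (TC p G).
Proof.
apply: measurable_sum => c; apply: measurable_funM; first exact: measurable_post.
apply: measurableT_comp; first exact: measurable_ln.
apply: measurable_funM; first exact: measurable_post.
apply: measurable_funV_ge0; last first.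
  by move=> x; apply: prodr_ge0 => i _; apply: sumr_ge0 => c' _; exact: post_ge0.
apply: measurable_prod => i _; rewrite /post_i.
under eq_fun do rewrite big_mkcond /=.
by apply: measurable_sum => c'; case: (c' i == c i); [exact: measurable_post|].
Qed.

Lemma TC_ge0 x : 0 <= TC p G x.
Proof.
have [m0|m_neq0] := eqVneq (m x) 0.
  by rewrite /TC big1 // => c _; rewrite {1}/post m0 invr0 mulr0 mul0r.
have m_gt0 : 0 < m x by rewrite lt_def m_neq0 marg_ge0.
by have := @tcorr_ge0 R L T (po ^~ x) (post_ge0 ^~ x) (sum_post x m_gt0).
Qed.

(* For C = c, the integrands of the conditional entropy H(C | X̂) and of the
   cross entropy against Q; MI and L_info are the averages over p(c) of
   surprisal c minus their integrals. *)
Definition surprisal c := - ln (jp c).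
Definition nlog_post c x := - (G c x * ln (po c x)).
Definition nlog_Q c x : \bar R := ((G c x)%:E * - elog (Qjoint q c x))%E.

Lemma surprisal_ge0 c : 0 <= surprisal c.
Proof. by rewrite oppr_ge0 ln_le0 // prod_pmf_le1. Qed.

Lemma Qjoint_le1 c x : Qjoint q c x <= 1.
Proof. exact: prod_pmf_le1 (hq^~ x) c. Qed.

Lemma nlog_Q_ge0 c x : (0 <= nlog_Q c x)%E.
Proof. by rewrite mule_ge0 ?lee_fin // oppe_ge0 elog_le0 ?Qjoint_le1. Qed.

Lemma nlog_post_ge0 c x : (0 <= (nlog_post c x)%:E)%E.
Proof. by rewrite lee_fin oppr_ge0 mulr_ge0_le0 // ln_le0 // post_le1. Qed.

Lemma measurable_nlog_post c : measurable_fun setT (fun x => (nlog_post c x)%:E).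
Proof.
apply/measurable_EFinP/measurable_funN/measurable_funM => //.
exact: measurableT_comp (measurable_post c).
Qed.

Lemma measurable_nlog_Q c : measurable_fun setT (nlog_Q c).
Proof.
have mQ : measurable_fun setT (Qjoint q c) by apply: measurable_prod => i _.
apply: emeasurable_funM; first exact/measurable_EFinP.
have -> : (fun x => - elog (Qjoint q c x))%E =
    (fun x => if 0 < Qjoint q c x then (- ln (Qjoint q c x))%:E else +oo%E).
  by apply/funext => x; rewrite /elog; case: ifP.
apply: measurable_fun_ifT; first exact: measurable_fun_ltr.
  by apply/measurable_EFinP/measurable_funN; exact: measurableT_comp mQ.
exact: measurable_cst.
Qed.

Lemma measurable_joint_sum (F : config T -> X -> \bar R) :
  (forall c, measurable_fun setT (F c)) ->
  measurable_fun setT (fun x => \sum_c (jp c)%:E * F c x)%E.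
Proof. by move=> mF; apply: emeasurable_sum => c; exact: emeasurable_funM. Qed.

Lemma joint_sum_ge0 (F : config T -> X -> \bar R) :
  (forall c x, 0 <= F c x)%E -> forall x, (0 <= \sum_c (jp c)%:E * F c x)%E.
Proof. by move=> F_ge0 x; apply: sume_ge0 => c _; rewrite mule_ge0 ?lee_fin ?joint_ge0. Qed.

Lemma integral_sum_joint (F : config T -> X -> \bar R) :
  (forall c, measurable_fun setT (F c)) -> (forall c x, 0 <= F c x)%E ->
  (\int[mu]_x \sum_c (jp c)%:E * F c x = \sum_c (jp c)%:E * \int[mu]_x F c x)%E.
Proof.
move=> mF F_ge0; rewrite ge0_integral_sum //.
- by apply: eq_bigr => c _; rewrite ge0_integralZl_EFin ?joint_ge0.
- by move=> c; apply: emeasurable_funM.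
- by move=> c x _; rewrite mule_ge0 ?lee_fin ?joint_ge0.
Qed.

Lemma joint_integral_ge0 c (F : X -> \bar R) :
  (forall x, 0 <= F x)%E -> (0 <= (jp c)%:E * \int[mu]_x F x)%E.
Proof. by move=> F_ge0; rewrite mule_ge0 ?lee_fin ?joint_ge0 ?integral_ge0. Qed.

Lemma integral_surprisal c : (\int[mu]_x (surprisal c * G c x)%:E = (surprisal c)%:E)%E.
Proof.
under eq_integral do rewrite EFinM.
rewrite ge0_integralZl_EFin ?G_int1 ?mule1 ?surprisal_ge0 //.
  by move=> x _; rewrite lee_fin.
exact/measurable_EFinP.
Qed.

Lemma MI_integrand c x : 0 < jp c ->
  G c x * ln (po c x / jp c) = surprisal c * G c x - nlog_post c x.
Proof.
move=> jp_gt0; rewrite /nlog_post /surprisal; have [->|G_neq0] := eqVneq (G c x) 0.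
  by rewrite !(mul0r, mulr0) oppr0 subr0.
have G_gt0 : 0 < G c x by rewrite lt_def G_neq0 G_ge0.
have m_gt0 : 0 < m x by apply: lt_le_trans (jointG_le_marg c x); exact: mulr_gt0.
have po_gt0 : 0 < po c x by rewrite divr_gt0 ?mulr_gt0.
by rewrite ln_div ?posrE //; ring.
Qed.

Lemma Linfo_integrand c x :
  ((G c x)%:E * (elog (Qjoint q c x) - (ln (jp c))%:E) =
   (surprisal c * G c x)%:E - nlog_Q c x)%E.
Proof.
rewrite /nlog_Q /elog /surprisal; case: ifP => _.
  by rewrite -?EFinN -?EFinB -?EFinM -?EFinB; congr EFin; ring.
have [->|G_neq0] := eqVneq (G c x) 0; first by rewrite mulr0 !mul0e sube0.
have G_gt0 : 0 < G c x by rewrite lt_def G_neq0 G_ge0.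
by rewrite /= gt0_muleNy ?lte_fin // gt0_muley ?lte_fin.
Qed.

Lemma joint_integral_surprisalB c (F B : X -> \bar R) :
  measurable_fun setT B -> (forall x, 0 <= B x)%E ->
  ((0 < jp c)%R -> forall x, F x = (surprisal c * G c x)%:E - B x)%E ->
  ((jp c)%:E * \int[mu]_x F x = (jp c * surprisal c)%:E - (jp c)%:E * \int[mu]_x B x)%E.
Proof.
move=> mB B_ge0 F_eq; have [->|jp_neq0] := eqVneq (jp c) 0.
  by rewrite !mul0e mul0r sube0.
have jp_gt0 : 0 < jp c by rewrite lt_def jp_neq0 joint_ge0.
under eq_integral => x _ do rewrite (F_eq jp_gt0 x).
rewrite ge0_integral_EFinB //.
- by rewrite integral_surprisal muleBr ?EFinM // fin_num_adde_defr.
- exact: measurable_funM.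
- by move=> x; rewrite mulr_ge0 ?surprisal_ge0.
- by rewrite integral_surprisal.
Qed.

Definition condH := (\int[mu]_x \sum_c (jp c)%:E * (nlog_post c x)%:E)%E.
Definition xentQ := (\int[mu]_x \sum_c (jp c)%:E * nlog_Q c x)%E.

Lemma MI_eq : MI p mu G = ((\sum_c jp c * surprisal c)%:E - condH)%E.
Proof.
have mU := measurable_nlog_post; have U_ge0 := nlog_post_ge0.
rewrite /condH integral_sum_joint // -sumeEFinB => [|c]; last exact: joint_integral_ge0.
apply: eq_bigr => c _; apply: joint_integral_surprisalB => // jp_gt0 x.
by rewrite MI_integrand // EFinB.
Qed.

Lemma Linfo_eq : Linfo p mu G q = ((\sum_c jp c * surprisal c)%:E - xentQ)%E.
Proof.
have mV := measurable_nlog_Q; have V_ge0 := nlog_Q_ge0.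
rewrite /xentQ integral_sum_joint // -sumeEFinB => [|c]; last exact: joint_integral_ge0.
by apply: eq_bigr => c _; apply: joint_integral_surprisalB => // _ x; exact: Linfo_integrand.
Qed.

Lemma joint_nlog_post_le_marg c x : jp c * nlog_post c x <= m x.
Proof.
rewrite /nlog_post mulrN mulrA jointG_marg_post -mulrA -mulrN.
rewrite -[X in _ <= X]mulr1 ler_wpM2l ?marg_ge0 //.
have := @sub_le_mul_lnB R (po c x) 1 (post_ge0 c x) ler01 (fun _ => ltr01).
by rewrite ln1 subr0; have := post_ge0 c x; lra.
Qed.

Lemma integral_marg : (\int[mu]_x (m x)%:E = (\sum_c jp c)%:E)%E.
Proof.
have mG' c : measurable_fun setT (fun x => (G c x)%:E) by exact/measurable_EFinP.
have G_ge0' c x : (0 <= (G c x)%:E)%E by rewrite lee_fin.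
under eq_integral do rewrite -sumEFin (eq_bigr _ (fun c _ => EFinM _ _)).
rewrite integral_sum_joint // -sumEFin.
by under eq_bigr do rewrite G_int1 mule1.
Qed.

Lemma condH_fin : condH \is a fin_num.
Proof.
have integrand_le x : (\sum_c (jp c)%:E * (nlog_post c x)%:E <= (#|config T|%:R * m x)%:E)%E.
  rewrite (eq_bigr _ (fun c _ => esym (EFinM _ _))) sumEFin lee_fin mulr_natl -sumr_const.
  by apply: ler_sum => c _; exact: joint_nlog_post_le_marg.
have H_ge0 x : [set: X] x -> (0 <= \sum_c (jp c)%:E * (nlog_post c x)%:E)%E.
  by move=> _; exact: joint_sum_ge0 _ nlog_post_ge0 x.
rewrite ge0_fin_numE ?integral_ge0 //.
apply: le_lt_trans (ge0_le_integral _ _ _ _ _ (fun x _ => integrand_le x)) _ => //.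
- exact: measurable_joint_sum measurable_nlog_post.
- by apply/measurable_EFinP/measurable_funM => //; exact: measurable_marg.
under eq_integral do rewrite EFinM.
rewrite ge0_integralZl_EFin ?integral_marg ?ltry //.
- by move=> x _; rewrite lee_fin marg_ge0.
- exact/measurable_EFinP/measurable_marg.
Qed.

Lemma entropy_add_TC_le_xent_at x :
  (\sum_c (jp c)%:E * (nlog_post c x)%:E + (m x * TC p G x)%:E <=
   \sum_c (jp c)%:E * nlog_Q c x)%E.
Proof.
have eH c : ((jp c)%:E * (nlog_post c x)%:E = (m x * - (po c x * ln (po c x)))%:E)%E.
  by rewrite -EFinM /nlog_post mulrN mulrA jointG_marg_post -mulrA mulrN.
have eQ c : ((jp c)%:E * nlog_Q c x =
    (m x)%:E * ((po c x)%:E * - elog (Qjoint q c x)))%E.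
  by rewrite /nlog_Q muleA -EFinM jointG_marg_post EFinM muleA.
rewrite (eq_bigr _ (fun c _ => eH c)) (eq_bigr _ (fun c _ => eQ c)).
rewrite sumEFin -EFinD -mulr_sumr -mulrDr EFinM -ge0_sume_distrr => [|c _]; last first.
  by rewrite mule_ge0 ?lee_fin ?post_ge0 // oppe_ge0 elog_le0 ?Qjoint_le1.
have [m0|m_neq0] := eqVneq (m x) 0; first by rewrite m0 !mul0e.
have m_gt0 : 0 < m x by rewrite lt_def m_neq0 marg_ge0.
rewrite lee_wpmul2l ?lee_fin ?marg_ge0 //.
by have := @entropy_add_tcorr_le_xent R L T (po ^~ x) (post_ge0 ^~ x) (sum_post x m_gt0)
  (fun i => q i x) (hq ^~ x).
Qed.

Lemma condH_add_ExpTC_le : (condH + ExpTC p mu G <= xentQ)%E.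
Proof.
have mH := measurable_joint_sum _ measurable_nlog_post.
have H_ge0 x : [set: X] x -> (0 <= \sum_c (jp c)%:E * (nlog_post c x)%:E)%E.
  by move=> _; exact: joint_sum_ge0 _ nlog_post_ge0 x.
have mTC : measurable_fun setT (fun x => (m x * TC p G x)%:E).
  by apply/measurable_EFinP/measurable_funM; [exact: measurable_marg|exact: measurable_TC].
have TC_ge0' x : [set: X] x -> (0 <= (m x * TC p G x)%:E)%E.
  by move=> _; rewrite lee_fin mulr_ge0 ?marg_ge0 ?TC_ge0.
rewrite /condH /ExpTC -ge0_integralD //; apply: ge0_le_integral => //.
- by move=> x _; rewrite adde_ge0 ?H_ge0 ?TC_ge0'.
- exact: emeasurable_funD mH mTC.
- exact: measurable_joint_sum _ measurable_nlog_Q.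
- by move=> x _; exact: entropy_add_TC_le_xent_at.
Qed.

Lemma ExpTC_ge0 : (0 <= ExpTC p mu G)%E.
Proof. by apply: integral_ge0 => x _; rewrite lee_fin mulr_ge0 ?marg_ge0 ?TC_ge0. Qed.

Lemma ExpTC_le_gap : (ExpTC p mu G <= MI p mu G - Linfo p mu G q)%E.
Proof.
rewrite MI_eq Linfo_eq; apply: lee_subB_gap => //.
- exact: condH_fin.
- exact: condH_add_ExpTC_le.
Qed.

End InformationGap.

Theorem lemma1 (R : realType) (L : nat) (T : 'I_L -> finType)
  (p : forall i : 'I_L, T i -> R)
  (d : measure_display) (X : measurableType d) (mu : {measure set X -> \bar R})
  (g : nat -> config T -> X -> R)
  (Q : nat -> forall i : 'I_L, X -> T i -> R) :
  (forall i, is_pmf (p i)) ->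
  (forall n c, measurable_fun setT (g n c)) ->
  (forall n c x, 0 <= g n c x) ->
  (forall n c, (\int[mu]_x (g n c x)%:E = 1)%E) ->
  (forall n i a, measurable_fun setT (fun x => Q n i x a)) ->
  (forall n i x, is_pmf (Q n i x)) ->
  (fun n => MI p mu (g n) - Linfo p mu (g n) (Q n))%E @ \oo --> 0%E ->
  (fun n => ExpTC p mu (g n)) @ \oo --> 0%E.
Proof.
move=> hp mg g_ge0 g_int1 mQ hQ gap_cvg0.
apply: (squeeze_cvge _ (cvg_cst 0%E) gap_cvg0); apply: nearW => n.
by rewrite ExpTC_ge0 ?ExpTC_le_gap.
Qed.
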